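(* Let $L>0$, $\mu>0$ and $0<\mu_{x}\le L$ be given, with $\kappa:=L/\mu\ge 2$. Then there exists a (quadratic) function $f:\mathbb{R}\times\mathbb{R}\to\mathbb{R}$ having a differential Stackelberg equilibrium $z^\ast$ with parameters $(L,\mu,\mu_{x})$ such that, whenever the stepsize ratio satisfies $r=\eta_y/\eta_x\le\kappa$, GDA with exact gradients does not converge locally to $z^\ast$, for every choice of stepsize $\eta_x>0$: that is, for every $\delta>0$ there is an initial point $z^0$ with $\|z^0-z^\ast\|_2\le\delta$ from which the GDA iterates do not converge to $z^\ast$.
   Context: Let $f:\mathbb{R}^n\times\mathbb{R}^m\to\mathbb{R}$ be twice continuously differentiable, and write $z=(x,y)$. For a point $z^\ast=(x^\ast,y^\ast)$ write the Hessian as $\nabla^2 f(z^\ast)=\begin{pmatrix} C & B\\ B^\top & -A\end{pmatrix}$ with $C=\nabla^2_{xx}f(z^\ast)$, $B=\nabla^2_{xy}f(z^\ast)$, $-A=\nabla^2_{yy}f(z^\ast)$. The point $z^\ast$ is a differential Stackelberg equilibrium if $\nabla_x f(z^\ast)=0$, $\nabla_y f(z^\ast)=0$, $A\succ 0$ and $C+BA^{-1}B^\top\succ 0$. It is said to have parameters $(L,\mu,\mu_x)$ if $\max\{\|A\|_2,\|B\|_2,\|C\|_2\}\le L$, $\mu=\lambda_{\min}(A)$ and $\mu_x=\min\{L,\lambda_{\min}(C+BA^{-1}B^\top)\}$; set $\kappa=L/\mu$, $\kappa_x=L/\mu_x$. GDA with stepsizes $\eta_x,\eta_y>0$ and exact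 gradients is the iteration $x^{k+1}=x^k-\eta_x\nabla_x f(x^k;y^k)$, $y^{k+1}=y^k+\eta_y\nabla_y f(x^k;y^k)$; the stepsize ratio is $r=\eta_y/\eta_x$. *)

From Stdlib Require Import Reals Lra.
From Coquelicot Require Import Coquelicot.
Open Scope R_scope.

(* Here n = m = 1: f : R -> R -> R, f x y = f(x,y). *)

Definition dx (f : R -> R -> R) (x y : R) : R := Derive (fun t => f t y) x.
Definition dy (f : R -> R -> R) (x y : R) : R := Derive (fun t => f x t) y.

Definition dxx (f : R -> R -> R) (x y : R) : R := Derive (fun t => dx f t y) x.
Definition dxy (f : R -> R -> R) (x y : R) : R := Derive (fun t => dx f x t) y.
Definition dyx (f : R -> R -> R) (x y : R) : R := Derive (fun t => dy f t y) x.
Definition dyy (f : R -> R -> R) (x y : R) : R := Derive (fun t => dy f x t) y.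

Definition cont2 (g : R -> R -> R) (x y : R) : Prop :=
  continuous (fun p : R * R => g (fst p) (snd p)) (x, y).

Definition C2 (f : R -> R -> R) : Prop :=
  forall x y,
    ex_derive (fun t => f t y) x /\ ex_derive (fun t => f x t) y /\
    ex_derive (fun t => dx f t y) x /\ ex_derive (fun t => dx f x t) y /\
    ex_derive (fun t => dy f t y) x /\ ex_derive (fun t => dy f x t) y /\
    cont2 f x y /\ cont2 (dx f) x y /\ cont2 (dy f) x y /\
    cont2 (dxx f) x y /\ cont2 (dxy f) x y /\
    cont2 (dyx f) x y /\ cont2 (dyy f) x y.

Definition hC (f : R -> R -> R) xs ys := dxx f xs ys.
Definition hB (f : R -> R -> R) xs ys := dxy f xs ys.
Definition hA (f : R -> R -> R) xs ys := - dyy f xs ys.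

(* differential Stackelberg equilibrium (1x1 blocks: A^{-1} = /A,
   A > 0 means A is positive definite) *)
Definition DSE (f : R -> R -> R) (xs ys : R) : Prop :=
  dx f xs ys = 0 /\ dy f xs ys = 0 /\ 0 < hA f xs ys /\
  0 < hC f xs ys + hB f xs ys * / hA f xs ys * hB f xs ys.

(* DSE with parameters (L, mu, mux); for 1x1 matrices the spectral norm is
   the absolute value and lambda_min is the entry itself. *)
Definition DSE_params (f : R -> R -> R) (xs ys L mu mux : R) : Prop :=
  DSE f xs ys /\
  Rmax (Rabs (hA f xs ys)) (Rmax (Rabs (hB f xs ys)) (Rabs (hC f xs ys))) <= L /\
  mu = hA f xs ys /\
  mux = Rmin L (hC f xs ys + hB f xs ys * / hA f xs ys * hB f xs ys).

Fixpoint gda (f : R -> R -> R) (ex ey : R) (z0 : R * R) (k : nat) : R * R :=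
  match k with
  | O => z0
  | S k' =>
      let z := gda f ex ey z0 k' in
      (fst z - ex * dx f (fst z) (snd z), snd z + ey * dy f (fst z) (snd z))
  end.

(* Take f(x, y) = -L/2 x^2 + b x y - mu/2 y^2 with b^2 = mu (L + mu_x), so that
   C + B^2/A = mu_x and the equilibrium is the origin.  GDA on a quadratic is
   linear, and the indefinite quadratic form
     Q(x, y) = eta_y b x^2 + eta_x b y^2 - (eta_x L + eta_y mu) x y
   is multiplied at each step by D = 1 + eta_x L - eta_y mu + eta_x eta_y mu mu_x,
   which is at least 1 as soon as r <= kappa.  Starting from (delta, 0), where
   Q > 0 = Q(0, 0), the iterates keep Q bounded away from its value at the
   origin, so by continuity of Q they cannot converge to it. *)
From Stdlib Require Import Reals Lra.
From Coquelicot Require Import Coquelicot.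
Open Scope R_scope.

Lemma continuous_quadratic (p q r s t u : R) (z : R * R) :
  continuous (fun w : R * R =>
    p * (fst w * fst w) + q * (fst w * snd w) + r * (snd w * snd w)
    + s * fst w + t * snd w + u) z.
Proof.
  assert (Hfst : continuous (fun w : R * R => fst w) z) by apply continuous_fst.
  assert (Hsnd : continuous (fun w : R * R => snd w) z) by apply continuous_snd.
  assert (Hcst : forall k : R, continuous (fun _ : R * R => k) z)
    by (intro; apply continuous_const).
  repeat apply (continuous_plus (V := R_NormedModule));
    repeat apply (continuous_mult (K := R_AbsRing)); auto.
Qed.

Lemma cont2_quadratic (g : R -> R -> R) (p q r s t u x y : R) :
  (forall x y, g x y = p * (x * x) + q * (x * y) + r * (y * y) + s * x + t * y + u) ->
  cont2 g x y.
Proof.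
  intro Hg. unfold cont2.
  apply (continuous_ext _ _ _ (fun w => eq_sym (Hg (fst w) (snd w)))).
  apply continuous_quadratic.
Qed.

Lemma not_filterlim_of_bounded_away {U : UniformSpace} (V : U -> R) (u : nat -> U)
    (l : U) (m : R) :
  continuous V l -> V l < m -> (forall k, m <= V (u k)) ->
  ~ filterlim u eventually (locally l).
Proof.
  intros HV Hlm Hu Hlim.
  pose proof (filterlim_comp _ _ _ _ _ _ _ _ Hlim HV) as HVu.
  destruct (proj1 (filterlim_locally _ _) HVu (mkposreal (m - V l) ltac:(lra)))
    as [N HN].
  specialize (HN N (Nat.le_refl N)). specialize (Hu N).
  unfold ball in HN; simpl in HN.
  unfold AbsRing_ball, abs, minus, plus, opp in HN; simpl in HN.
  apply Rabs_lt_between in HN. lra.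
Qed.

Section QuadraticGame.

Variables a b c : R.

Definition fq (x y : R) : R := c / 2 * (x * x) + b * (x * y) - a / 2 * (y * y).

Lemma dx_fq x y : dx fq x y = c * x + b * y.
Proof. apply is_derive_unique. unfold fq. auto_derive; [exact I | field]. Qed.

Lemma dy_fq x y : dy fq x y = b * x - a * y.
Proof. apply is_derive_unique. unfold fq. auto_derive; [exact I | field]. Qed.

Lemma dxx_fq x y : dxx fq x y = c.
Proof.
  unfold dxx.
  rewrite (Derive_ext _ (fun t => c * t + b * y)) by (intro t; exact (dx_fq t _)).
  apply is_derive_unique. auto_derive; [exact I | ring].
Qed.

Lemma dxy_fq x y : dxy fq x y = b.
Proof.
  unfold dxy.
  rewrite (Derive_ext _ (fun t => c * x + b * t)) by (intro t; exact (dx_fq _ t)).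
  apply is_derive_unique. auto_derive; [exact I | ring].
Qed.

Lemma dyx_fq x y : dyx fq x y = b.
Proof.
  unfold dyx.
  rewrite (Derive_ext _ (fun t => b * t - a * y)) by (intro t; exact (dy_fq t _)).
  apply is_derive_unique. auto_derive; [exact I | ring].
Qed.

Lemma dyy_fq x y : dyy fq x y = - a.
Proof.
  unfold dyy.
  rewrite (Derive_ext _ (fun t => b * x - a * t)) by (intro t; exact (dy_fq _ t)).
  apply is_derive_unique. auto_derive; [exact I | ring].
Qed.

Lemma C2_fq : C2 fq.
Proof.
  intros x y.
  split; [unfold fq; auto_derive; exact I |].
  split; [unfold fq; auto_derive; exact I |].
  split; [apply (ex_derive_ext (fun t => c * t + b * y));
          [intro; symmetry; apply dx_fq | auto_derive; exact I] |].
  split; [apply (ex_derive_ext (fun t => c * x + b * t));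
          [intro; symmetry; apply dx_fq | auto_derive; exact I] |].
  split; [apply (ex_derive_ext (fun t => b * t - a * y));
          [intro; symmetry; apply dy_fq | auto_derive; exact I] |].
  split; [apply (ex_derive_ext (fun t => b * x - a * t));
          [intro; symmetry; apply dy_fq | auto_derive; exact I] |].
  split; [apply (cont2_quadratic _ (c / 2) b (- a / 2) 0 0 0); intros; unfold fq; lra |].
  split; [apply (cont2_quadratic _ 0 0 0 c b 0); intros; rewrite dx_fq; ring |].
  split; [apply (cont2_quadratic _ 0 0 0 b (- a) 0); intros; rewrite dy_fq; ring |].
  split; [apply (cont2_quadratic _ 0 0 0 0 0 c); intros; rewrite dxx_fq; ring |].
  split; [apply (cont2_quadratic _ 0 0 0 0 0 b); intros; rewrite dxy_fq; ring |].
  split; [apply (cont2_quadratic _ 0 0 0 0 0 b); intros; rewrite dyx_fq; ring |].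
  apply (cont2_quadratic _ 0 0 0 0 0 (- a)); intros; rewrite dyy_fq; ring.
Qed.

Variables ex ey : R.

(* One GDA step is the linear map M with det M = gda_form_factor, and the
   symmetric matrix S of this form satisfies M^T S M = (det M) S. *)
Definition gda_form (z : R * R) : R :=
  ey * b * (fst z * fst z) + ex * b * (snd z * snd z)
  + (ex * c - ey * a) * (fst z * snd z).

Definition gda_form_factor : R := (1 - ex * c) * (1 - ey * a) + ex * ey * (b * b).

Lemma gda_form_step z0 k :
  gda_form (gda fq ex ey z0 (S k)) = gda_form_factor * gda_form (gda fq ex ey z0 k).
Proof. simpl. rewrite dx_fq, dy_fq. unfold gda_form, gda_form_factor; simpl. ring. Qed.

Lemma gda_form_ge_initial z0 k :
  1 <= gda_form_factor -> 0 <= gda_form z0 ->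
  gda_form z0 <= gda_form (gda fq ex ey z0 k).
Proof.
  intros HD H0. induction k as [|k IH]; [apply Rle_refl |].
  rewrite gda_form_step. nra.
Qed.

Lemma continuous_gda_form z : continuous gda_form z.
Proof.
  apply (continuous_ext
    (fun w : R * R => ey * b * (fst w * fst w) + (ex * c - ey * a) * (fst w * snd w)
       + ex * b * (snd w * snd w) + 0 * fst w + 0 * snd w + 0)).
  - intro w. unfold gda_form. simpl. lra.
  - apply continuous_quadratic.
Qed.

End QuadraticGame.

Section HardInstance.

Variables L mu mux : R.
Hypotheses (HL : 0 < L) (Hmu : 0 < mu) (Hmux : 0 < mux) (HmuxL : mux <= L)
  (Hkappa : 2 <= L / mu).

Let b := sqrt (mu * (L + mux)).

Lemma coupling_sqr : b * b = mu * (L + mux).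
Proof. apply sqrt_sqrt. nra. Qed.

Lemma coupling_pos : 0 < b.
Proof. apply sqrt_lt_R0. nra. Qed.

Lemma double_mu_le : 2 * mu <= L.
Proof. replace L with (L / mu * mu) by (field; lra). nra. Qed.

Lemma coupling_le : b <= L.
Proof. pose proof double_mu_le. pose proof coupling_sqr. pose proof coupling_pos. nra. Qed.

Lemma DSE_params_fq : DSE_params (fq mu b (- L)) 0 0 L mu mux.
Proof.
  unfold DSE_params, DSE, hA, hB, hC.
  rewrite dx_fq, dy_fq, dxx_fq, dxy_fq, dyy_fq, Ropp_involutive.
  assert (Hschur : - L + b * / mu * b = mux).
  { replace (b * / mu * b) with (b * b / mu) by (field; lra).
    rewrite coupling_sqr. field. lra. }
  rewrite Hschur, Rabs_Ropp, (Rabs_pos_eq mu), (Rabs_pos_eq b), (Rabs_pos_eq L) by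
    (pose proof coupling_pos; lra).
  pose proof double_mu_le. pose proof coupling_le. pose proof coupling_pos.
  split; [repeat split; lra |].
  split; [apply Rmax_lub; [lra | apply Rmax_lub; lra] |].
  split; [reflexivity | symmetry; apply Rmin_right; lra].
Qed.

Lemma gda_form_factor_ge1 ex ey :
  0 < ex -> 0 < ey -> ey / ex <= L / mu -> 1 <= gda_form_factor mu b (- L) ex ey.
Proof.
  intros Hex Hey Hr.
  assert (Hr' : ey * mu <= ex * L).
  { replace (ey * mu) with (ey / ex * (ex * mu)) by (field; lra).
    replace (ex * L) with (L / mu * (ex * mu)) by (field; lra).
    apply Rmult_le_compat_r; nra. }
  unfold gda_form_factor. rewrite coupling_sqr.
  assert (0 <= ex * ey * (mu * mux)) by (repeat apply Rmult_le_pos; lra).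
  nra.
Qed.

End HardInstance.

Theorem theorem1 :
  forall L mu mux : R,
    0 < L -> 0 < mu -> 0 < mux -> mux <= L -> 2 <= L / mu ->
    exists (f : R -> R -> R) (xs ys : R),
      C2 f /\ DSE_params f xs ys L mu mux /\
      forall ex ey : R, 0 < ex -> 0 < ey -> ey / ex <= L / mu ->
        forall delta : R, 0 < delta ->
          exists x0 y0 : R,
            sqrt ((x0 - xs) ^ 2 + (y0 - ys) ^ 2) <= delta /\
            ~ filterlim (gda f ex ey (x0, y0)) eventually (locally (xs, ys)).
Proof.
  intros L mu mux HL Hmu Hmux HmuxL Hkappa.
  set (b := sqrt (mu * (L + mux))).
  exists (fq mu b (- L)), 0, 0.
  split; [apply C2_fq |].
  split; [apply DSE_params_fq; assumption |].
  intros ex ey Hex Hey Hr delta Hdelta. exists delta, 0. split.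
  - replace ((delta - 0) ^ 2 + (0 - 0) ^ 2) with (Rsqr delta) by (unfold Rsqr; ring).
    rewrite sqrt_Rsqr; lra.
  - assert (Hb : 0 < b) by (apply coupling_pos; assumption).
    assert (Hstart : 0 < gda_form mu b (- L) ex ey (delta, 0)).
    { unfold gda_form; simpl.
      assert (0 < ey * b * (delta * delta)) by (repeat apply Rmult_lt_0_compat; lra).
      lra. }
    apply (not_filterlim_of_bounded_away _ _ _ (gda_form mu b (- L) ex ey (delta, 0))
             (continuous_gda_form mu b (- L) ex ey (0, 0))).
    + replace (gda_form mu b (- L) ex ey (0, 0)) with 0
        by (unfold gda_form; simpl; ring).
      exact Hstart.
    + intro k. apply gda_form_ge_initial; [apply gda_form_factor_ge1 | apply Rlt_le]; assumption.
Qed.
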